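(* Let $\mathcal L$ be a finite-dimensional Lie algebra over $\mathbb Q_p$ with $(\mathcal L,\mathcal L)=\mathcal L$, of dimension $d$, and let $\sigma$ be a Lie algebra automorphism of $\mathcal L$ of order $2$, with type $t_\sigma(\mathcal L)=(a,b)$. Then $a\ne0$ and $b>1$.
   Context: $t_\sigma(\mathcal L)=(a,b)$ with $a=\dim\ker(\sigma-\mathrm{id})$ and $b=\dim\ker(\sigma+\mathrm{id})$, so $a+b=d$. *)

From HB Require Import structures.
From mathcomp Require Import all_boot all_order all_algebra.
Set Implicit Arguments. Unset Strict Implicit. Unset Printing Implicit Defensive.
Import GRing.Theory.
Local Open Scope ring_scope.

Definition is_lie_algebra (F : fieldType) (V : vectType F) (br : V -> V -> V) : Prop :=
  [/\ (forall x, linear (br x)),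
      (forall y, linear (fun x => br x y)),
      (forall x, br x x = 0) &
      (forall x y z, br x (br y z) + br y (br z x) + br z (br x y) = 0)].

(* (L,L) = L : every element lies in the linear span of the brackets [x,y] *)
Definition lie_perfect (F : fieldType) (V : vectType F) (br : V -> V -> V) : Prop :=
  forall z : V, exists s : seq (F * V * V),
    z = \sum_(t <- s) t.1.1 *: br t.1.2 t.2.

Definition is_lie_aut (F : fieldType) (V : vectType F) (br : V -> V -> V)
  (sigma : 'End(V)) : Prop :=
  lker sigma = 0%VS /\ (forall x y, sigma (br x y) = br (sigma x) (sigma y)).

Definition order2 (F : fieldType) (V : vectType F) (sigma : 'End(V)) : Prop :=
  (sigma \o sigma)%VF = \1%VF /\ sigma != \1%VF.

Definition lie_type (F : fieldType) (V : vectType F) (sigma : 'End(V)) : nat * nat :=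
  (\dim (lker (sigma - \1%VF)), \dim (lker (sigma + \1%VF))).

(* Split L = L+ (+) L- into the eigenspaces of sigma; the projections are
   (1 + sigma)/2 and (1 - sigma)/2, so only 2 != 0 is used.  The bracket
   respects this Z/2-grading, hence perfectness gives L+ = [L+,L+] + [L-,L-]
   and L- = [L+,L-].  If L+ = 0 then L- = [L+,L-] = 0.  If L- = F v is a line,
   then [L-,L-] = 0, so L+ = [L+,L+]; each u in L+ acts on v by a scalar
   [u,v] = lambda(u) v, and Jacobi makes lambda vanish on [L+,L+] = L+, so
   again L- = [L+,L-] = 0.  Either way sigma = 1. *)

From HB Require Import structures.
From mathcomp Require Import all_boot all_order all_algebra.
Set Implicit Arguments.
Unset Strict Implicit.
Unset Printing Implicit Defensive.

Import GRing.Theory.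
Local Open Scope ring_scope.

Section LieBracket.

Variables (F : fieldType) (V : vectType F) (br : V -> V -> V).
Hypothesis lieV : is_lie_algebra br.

Lemma br_linear_r x : linear (br x). Proof. by case: lieV. Qed.
Lemma br_linear_l y : linear (br^~ y). Proof. by case: lieV. Qed.

Definition adl x : 'End(V) :=
  linfun (HB.pack_for {linear V -> V} (br x)
    (GRing.isLinear.Build _ _ _ _ _ (br_linear_r x))).
Definition adr y : 'End(V) :=
  linfun (HB.pack_for {linear V -> V} (br^~ y)
    (GRing.isLinear.Build _ _ _ _ _ (br_linear_l y))).

Lemma adlE x y : adl x y = br x y. Proof. exact: lfunE. Qed.
Lemma adrE x y : adr y x = br x y. Proof. exact: lfunE. Qed.

Lemma brDl y : {morph br^~ y : u w / u + w}.
Proof. by move=> u w; rewrite -!adrE linearD. Qed.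
Lemma brDr x : {morph br x : u w / u + w}.
Proof. by move=> u w; rewrite -!adlE linearD. Qed.
Lemma brZl y k u : br (k *: u) y = k *: br u y.
Proof. by rewrite -!adrE linearZ. Qed.
Lemma brZr x k u : br x (k *: u) = k *: br x u.
Proof. by rewrite -!adlE linearZ. Qed.
Lemma brNl y u : br (- u) y = - br u y.
Proof. by rewrite -!adrE linearN. Qed.
Lemma brNr x u : br x (- u) = - br x u.
Proof. by rewrite -!adlE linearN. Qed.
Lemma br0l y : br 0 y = 0.
Proof. by rewrite -adrE linear0. Qed.

Lemma br_alt x : br x x = 0. Proof. by case: lieV. Qed.

Lemma br_jacobi x y z : br x (br y z) + br y (br z x) + br z (br x y) = 0.
Proof. by case: lieV. Qed.

Lemma br_anti x y : br x y = - br y x.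
Proof.
apply/eqP; rewrite -addr_eq0; apply/eqP.
by have := br_alt (x + y); rewrite brDl !brDr !br_alt add0r addr0.
Qed.

End LieBracket.

Section LieInvolution.

Variables (F : fieldType) (V : vectType F) (br : V -> V -> V) (sigma : 'End(V)).
Hypothesis lieV : is_lie_algebra br.
Hypothesis sigma_br : forall x y, sigma (br x y) = br (sigma x) (sigma y).
Hypothesis sigmaK : involutive sigma.
Hypothesis two_neq0 : 2%:R != 0 :> F.

Definition sym : 'End(V) := (sigma + \1)%VF.
Definition skew : 'End(V) := (\1 - sigma)%VF.

Lemma symE x : sym x = sigma x + x.
Proof. by rewrite add_lfunE id_lfunE. Qed.

Lemma skewE x : skew x = x - sigma x.
Proof. by rewrite add_lfunE opp_lfunE id_lfunE. Qed.

Lemma sigma_sym x : sigma (sym x) = sym x.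
Proof. by rewrite symE linearD /= sigmaK addrC. Qed.

Lemma sigma_skew x : sigma (skew x) = - skew x.
Proof. by rewrite skewE linearB /= sigmaK opprB. Qed.

Lemma sym_add_skew x : sym x + skew x = 2 *: x.
Proof. by rewrite symE skewE addrC addrA subrK scaler_nat mulr2n. Qed.

Lemma sym_fixed u : sigma u = u -> sym u = 2 *: u.
Proof. by move=> hu; rewrite symE hu scaler_nat mulr2n. Qed.

Lemma sym_anti w : sigma w = - w -> sym w = 0.
Proof. by move=> hw; rewrite symE hw addNr. Qed.

Lemma skew_fixed u : sigma u = u -> skew u = 0.
Proof. by move=> hu; rewrite skewE hu subrr. Qed.

Lemma skew_anti w : sigma w = - w -> skew w = 2 *: w.
Proof. by move=> hw; rewrite skewE hw opprK scaler_nat mulr2n. Qed.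

Lemma br_sym_skew_expand x y :
  2 *: (2 *: br x y) =
  br (sym x) (sym y) + br (sym x) (skew y) + br (skew x) (sym y) + br (skew x) (skew y).
Proof.
rewrite -(brZl lieV) -(brZr lieV) -[2 *: x]sym_add_skew -[2 *: y]sym_add_skew.
by rewrite (brDl lieV) !(brDr lieV) !addrA.
Qed.

Lemma sym_br x y : 2 *: sym (br x y) = br (sym x) (sym y) + br (skew x) (skew y).
Proof.
apply: (scalerI two_neq0).
have := congr1 sym (br_sym_skew_expand x y); rewrite !linearZ !linearD /= => ->.
rewrite [sym (br (sym x) (skew y))]sym_anti; last first.
  by rewrite sigma_br sigma_sym sigma_skew (brNr lieV).
rewrite [sym (br (skew x) (sym y))]sym_anti; last first.
  by rewrite sigma_br sigma_sym sigma_skew (brNl lieV).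
rewrite !addr0 [sym (br (sym x) (sym y))]sym_fixed; last by rewrite sigma_br !sigma_sym.
rewrite [sym (br (skew x) (skew y))]sym_fixed //.
by rewrite sigma_br !sigma_skew (brNl lieV) (brNr lieV) opprK.
Qed.

Lemma skew_br x y : 2 *: skew (br x y) = br (sym x) (skew y) + br (skew x) (sym y).
Proof.
apply: (scalerI two_neq0).
have := congr1 skew (br_sym_skew_expand x y); rewrite !linearZ !linearD /= => ->.
rewrite [skew (br (sym x) (sym y))]skew_fixed; last by rewrite sigma_br !sigma_sym.
rewrite [skew (br (skew x) (skew y))]skew_fixed; last first.
  by rewrite sigma_br !sigma_skew (brNl lieV) (brNr lieV) opprK.
rewrite add0r addr0 [skew (br (sym x) (skew y))]skew_anti; last first.
  by rewrite sigma_br sigma_sym sigma_skew (brNr lieV).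
rewrite [skew (br (skew x) (sym y))]skew_anti //.
by rewrite sigma_br sigma_sym sigma_skew (brNl lieV).
Qed.

Hypothesis perfV : lie_perfect br.

Lemma fixed_in_brackets (U : {vspace V}) :
  (forall u w, sigma u = u -> sigma w = w -> br u w \in U) ->
  (forall u w, sigma u = - u -> sigma w = - w -> br u w \in U) ->
  forall u, sigma u = u -> u \in U.
Proof.
move=> fixedU antiU u hu.
suff: 2 *: (2 *: u) \in U by rewrite !rpredZeq (negbTE two_neq0).
rewrite -(sym_fixed hu); have [s ->] := perfV u.
rewrite linear_sum scaler_sumr memv_suml // => t _.
rewrite linearZ /= scalerA mulrC -scalerA sym_br memvZ // memvD //.
  by apply: fixedU; apply: sigma_sym.
by apply: antiU; apply: sigma_skew.
Qed.

Lemma anti_in_brackets (U : {vspace V}) :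
  (forall u w, sigma u = u -> sigma w = - w -> br u w \in U) ->
  forall w, sigma w = - w -> w \in U.
Proof.
move=> mixedU w hw.
suff: 2 *: (2 *: w) \in U by rewrite !rpredZeq (negbTE two_neq0).
rewrite -(skew_anti hw); have [s ->] := perfV w.
rewrite linear_sum scaler_sumr memv_suml // => t _.
rewrite linearZ /= scalerA mulrC -scalerA skew_br memvZ // memvD //.
  by apply: mixedU; [apply: sigma_sym | apply: sigma_skew].
rewrite (br_anti lieV) memvN //.
by apply: mixedU; [apply: sigma_sym | apply: sigma_skew].
Qed.

Lemma fixed_space_neq0 : sigma != \1%VF -> lker (sigma - \1%VF) != 0%VS.
Proof.
apply: contra_neq => fixed_space0.
have fixed0 u : sigma u = u -> u = 0.
  move=> hu; apply/eqP; rewrite -memv0 -fixed_space0 memv_ker.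
  by rewrite add_lfunE opp_lfunE id_lfunE hu subrr.
have anti0 w : sigma w = - w -> w = 0.
  move=> hw; apply/eqP; rewrite -memv0; apply: anti_in_brackets hw => u w' hu _.
  by rewrite (fixed0 u hu) (br0l lieV) mem0v.
apply/lfunP => x; rewrite id_lfunE; apply/eqP; rewrite -subr_eq0 -opprB -skewE.
by rewrite (anti0 _ (sigma_skew x)) oppr0.
Qed.

Lemma anti_space_neq0 : sigma != \1%VF -> lker (sigma + \1%VF) != 0%VS.
Proof.
apply: contra_neq => anti_space0; apply/lfunP => x; rewrite id_lfunE.
have : skew x \in lker sym by rewrite memv_ker (sym_anti (sigma_skew x)).
by rewrite anti_space0 memv0 skewE subr_eq0 eq_sym => /eqP.
Qed.

Section AntiLine.

Variable v : V.
Hypothesis anti_line : lker (sigma + \1%VF) = <[v]>%VS.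

Lemma anti_line_scale w : sigma w = - w -> exists k, w = k *: v.
Proof. by move=> hw; apply/vlineP; rewrite -anti_line memv_ker -/sym sym_anti. Qed.

Lemma sigma_line : sigma v = - v.
Proof.
have : v \in lker sym by rewrite anti_line memv_line.
by rewrite memv_ker symE addr_eq0 => /eqP.
Qed.

Lemma br_anti_line w1 w2 : sigma w1 = - w1 -> sigma w2 = - w2 -> br w1 w2 = 0.
Proof.
move=> /anti_line_scale [k1 ->] /anti_line_scale [k2 ->].
by rewrite (brZl lieV) (brZr lieV) (br_alt lieV) !scaler0.
Qed.

Lemma br_fixed_line u : sigma u = u -> br u v = 0.
Proof.
have br_line u' : sigma u' = u' -> exists k, br u' v = k *: v.
  by move=> hu'; apply: anti_line_scale; rewrite sigma_br hu' sigma_line (brNr lieV).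
move=> hu; apply/eqP; rewrite -adrE -memv_ker.
apply: fixed_in_brackets hu => [u1 u2 hu1 hu2 | w1 w2 hw1 hw2]; rewrite memv_ker adrE.
  have [k1 e1] := br_line _ hu1; have [k2 e2] := br_line _ hu2.
  have := br_jacobi lieV u1 u2 v.
  rewrite e2 (brZr lieV) (br_anti lieV v u1) e1 (brNr lieV) (brZr lieV) e2.
  by rewrite !scalerA mulrC subrr add0r (br_anti lieV) => /eqP; rewrite oppr_eq0.
by rewrite (br_anti_line hw1 hw2) (br0l lieV).
Qed.

Lemma anti_line_eq0 : v = 0.
Proof.
apply/eqP; rewrite -memv0; apply: anti_in_brackets sigma_line => u w hu.
by move=> /anti_line_scale [k ->]; rewrite (brZr lieV) br_fixed_line // scaler0 mem0v.
Qed.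

End AntiLine.

Lemma anti_space_dim_gt1 : sigma != \1%VF -> (1 < \dim (lker (sigma + \1%VF)%R))%N.
Proof.
move=> sigma_neq1; have := anti_space_neq0 sigma_neq1.
rewrite -dimv_eq0 ltnNge leq_eqVlt ltnS leqn0 => /negbTE ->; rewrite orbF.
apply/negP => /eqP dim1.
set v := vpick (lker (sigma + \1%VF)).
have v_neq0 : v != 0 by rewrite vpick0 -dimv_eq0 dim1.
have anti_line : lker (sigma + \1%VF) = <[v]>%VS.
  by apply/esym/eqP; rewrite eqEdim dim_vline v_neq0 dim1 -memvE memv_pick.
by move/eqP: v_neq0; apply; apply: anti_line_eq0 anti_line.
Qed.

End LieInvolution.

Theorem mainTheorem13 (F : fieldType) (V : vectType F) (br : V -> V -> V)
  (sigma : 'End(V)) (a b : nat) :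
  [pchar F] =i pred0 ->
  is_lie_algebra br ->
  lie_perfect br ->
  is_lie_aut br sigma ->
  order2 sigma ->
  lie_type sigma = (a, b) ->
  (a != 0)%N /\ (1 < b)%N.
Proof.
move=> char0 lieV perfV [_ sigma_br] [sigma2 sigma_neq1] [<- <-].
have sigmaK : involutive sigma.
  by move=> x; rewrite -comp_lfunE sigma2 id_lfunE.
have two_neq0 : 2%:R != 0 :> F by rewrite (pcharf0P F).1.
split.
  by rewrite dimv_eq0 (fixed_space_neq0 lieV sigma_br sigmaK two_neq0 perfV).
exact: anti_space_dim_gt1 lieV sigma_br sigmaK two_neq0 perfV sigma_neq1.
Qed.
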